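(* Let $G$ be a finite $p$-group with $Z(G)$ cyclic, let $\alpha\in Z^2(G,\mathbb{C}^\times)$ and let $\rho$ be an irreducible $\alpha$-representation of $G$. Then $\rho$ is faithful if and only if, for any (equivalently, some) non-trivial subgroup $A\le Z(G)$, the restriction $\rho|_A$ is faithful, i.e. no $1\ne a\in A$ has $\rho(a)$ a scalar matrix.
   Context: An $\alpha$-representation is a map $\rho:G\to\mathrm{GL}(V)$ with $\rho(1)=1$ and $\rho(g)\rho(h)=\alpha(g,h)\rho(gh)$; it is faithful if the only $g\in G$ with $\rho(g)$ scalar is $g=1$. *)

From HB Require Import structures.
From mathcomp Require Import all_boot all_order all_algebra all_fingroup all_solvable all_field.
Set Implicit Arguments. Unset Strict Implicit. Unset Printing Implicit Defensive.
Import GRing.Theory.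
Local Open Scope group_scope.
Local Open Scope ring_scope.

(* A 2-cocycle of G with values in C^x (trivial action), modelled by algC. *)
Definition cocycle2 (gT : finGroupType) (G : {set gT}) (alpha : gT -> gT -> algC) : Prop :=
  (forall g h, g \in G -> h \in G -> alpha g h != 0%R) /\
  (forall g h k, g \in G -> h \in G -> k \in G ->
     (alpha g h * alpha (g * h)%g k = alpha h k * alpha g (h * k)%g)%R).

Definition alpha_rep (gT : finGroupType) (G : {set gT}) (alpha : gT -> gT -> algC)
  (n : nat) (rho : gT -> 'M[algC]_n) : Prop :=
  rho 1%g = 1%:M /\
  (forall g h, g \in G -> h \in G -> rho g *m rho h = alpha g h *: rho (g * h)%g).

Definition alpha_rep_irr (gT : finGroupType) (G : {set gT})
  (n : nat) (rho : gT -> 'M[algC]_n) : Prop :=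
  (0 < n)%N /\
  forall m (U : 'M[algC]_(m, n)),
    (forall g, g \in G -> (U *m rho g <= U)%MS) -> (U == 0)%R || row_full U.

Definition faithful_on (gT : finGroupType) (A : {set gT})
  (n : nat) (rho : gT -> 'M[algC]_n) : Prop :=
  forall a, a \in A -> is_scalar_mx (rho a) -> a = 1%g.

From mathcomp Require Import all_boot all_order all_algebra all_fingroup all_solvable all_field.
Set Implicit Arguments. Unset Strict Implicit. Unset Printing Implicit Defensive.
Import GRing.Theory.
Local Open Scope group_scope.

(* The elements of G acting by scalars form a normal subgroup of G, the
   kernel of the projective representation induced by rho.  In a p-group
   every nontrivial normal subgroup meets the centre, and when the centre is
   cyclic every nontrivial subgroup of it contains the unique subgroup of
   order p.  So if rho is faithful on one nontrivial central subgroup A, the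
   kernel meets A trivially and must itself be trivial. *)

Lemma Ohm1_cyclic_pgroup_sub (gT : finGroupType) (p : nat) (C H : {group gT}) :
  cyclic C -> p.-group C -> H \subset C -> H :!=: 1 -> 'Ohm_1(C) \subset H.
Proof.
move=> cycC pC sHC ntH.
have ntC : C :!=: 1 by apply: contraNneq ntH => C1; rewrite -subG1 -C1.
have pH := pgroupS sHC pC.
have <- : 'Ohm_1(H) = 'Ohm_1(C).
  apply/eqP; rewrite (eq_subG_cyclic cycC) ?Ohm_sub ?(subset_trans (Ohm_sub 1 H)) //.
  by rewrite (Ohm1_cyclic_pgroup_prime _ pH) ?(Ohm1_cyclic_pgroup_prime _ pC) ?(cyclicS sHC).
exact: Ohm_sub.
Qed.

Lemma cyclic_pgroup_meet (gT : finGroupType) (p : nat) (C H K : {group gT}) :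
  cyclic C -> p.-group C -> H \subset C -> K \subset C ->
  H :!=: 1 -> K :!=: 1 -> H :&: K != 1.
Proof.
move=> cycC pC sHC sKC ntH ntK.
have ntC : C :!=: 1 by apply: contraNneq ntH => C1; rewrite -subG1 -C1.
apply: contraNneq ntC => tiHK; rewrite -Ohm1_eq1 -subG1 -tiHK subsetI.
by rewrite !(Ohm1_cyclic_pgroup_sub cycC pC).
Qed.

Lemma normal_meet_cyclic_center (gT : finGroupType) (p : nat) (G K A : {group gT}) :
  p.-group G -> cyclic 'Z(G) -> K <| G -> K :!=: 1 ->
  A \subset 'Z(G) -> A :!=: 1 -> K :&: A != 1.
Proof.
move=> pG cycZ nKG ntK sAZ ntA.
have ntKZ := meet_center_nil (pgroup_nil pG) nKG ntK.
have pZ := pgroupS (center_sub G) pG.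
have := cyclic_pgroup_meet cycZ pZ (subsetIr K _) sAZ ntKZ ntA.
apply: contraNneq => tiKA; rewrite -subG1 -tiKA.
by rewrite setSI ?subsetIl.
Qed.

Lemma is_scalar_mxZ (F : fieldType) (n : nat) (x : F) (M : 'M[F]_n) :
  x != 0%R -> is_scalar_mx (x *: M)%R = is_scalar_mx M.
Proof.
move=> x_neq0; apply/is_scalar_mxP/is_scalar_mxP => -[c defM].
  by exists (x^-1 * c)%R; rewrite -scale_scalar_mx -defM scalerA mulVf ?scale1r.
by exists (x * c)%R; rewrite defM scale_scalar_mx.
Qed.

Definition scalar_kernel (gT : finGroupType) (G : {set gT}) (n : nat)
    (rho : gT -> 'M[algC]_n) : {set gT} :=
  [set g in G | is_scalar_mx (rho g)].

Section ScalarKernel.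

Variables (gT : finGroupType) (G : {group gT}) (alpha : gT -> gT -> algC).
Variables (n : nat) (rho : gT -> 'M[algC]_n).
Hypothesis alpha_neq0 : forall g h, g \in G -> h \in G -> alpha g h != 0%R.
Hypothesis rho_rep : alpha_rep G alpha rho.

Local Notation K := (scalar_kernel G rho).

Lemma scalar_kernel_sub : K \subset G.
Proof. by apply/subsetP => g; rewrite inE => /andP[]. Qed.

Lemma scalar_kernelM g h : g \in K -> h \in K -> g * h \in K.
Proof.
have [_ rhoM] := rho_rep.
rewrite !inE => /andP[gG /is_scalar_mxP[a rho_g]] /andP[hG /is_scalar_mxP[b rho_h]].
rewrite groupM // -(is_scalar_mxZ _ (alpha_neq0 gG hG)) -rhoM //.
by rewrite rho_g rho_h -scalar_mxM scalar_mx_is_scalar.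
Qed.

Fact scalar_kernel_group_set : group_set K.
Proof.
have [rho1 _] := rho_rep.
apply/group_setP; split; last exact: scalar_kernelM.
by rewrite inE group1 rho1 scalar_mx_is_scalar.
Qed.

Canonical scalar_kernel_group := Group scalar_kernel_group_set.

(* rho(x^-1) rho(g) rho(x) is a nonzero multiple of rho(g ^ x), and it is
   a * rho(x^-1) rho(x), itself a multiple of rho 1 = 1, when rho(g) = a. *)
Lemma scalar_kernelJ g x : x \in G -> g \in K -> g ^ x \in K.
Proof.
have [rho1 rhoM] := rho_rep.
move=> xG; rewrite !inE => /andP[gG /is_scalar_mxP[a rho_g]].
have xVG : x^-1 \in G by rewrite groupV.
have gxG : g * x \in G by rewrite groupM.
rewrite groupJ //= conjgE -(is_scalar_mxZ _ (alpha_neq0 xVG gxG)) -rhoM //.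
rewrite -(is_scalar_mxZ _ (alpha_neq0 gG xG)) scalemxAr -rhoM //.
rewrite rho_g mul_scalar_mx -scalemxAr rhoM // mulVg rho1.
by rewrite !scale_scalar_mx scalar_mx_is_scalar.
Qed.

Lemma scalar_kernel_normal : K <| G.
Proof.
apply/normalP; split=> [|x xG]; first exact: scalar_kernel_sub.
apply/eqP; rewrite eqEcard cardJg leqnn andbT.
apply/subsetP => y; rewrite mem_conjg => yK.
by rewrite -(conjgKV x y) scalar_kernelJ.
Qed.

Lemma faithful_onP (A : {group gT}) :
  A \subset G -> reflect (faithful_on A rho) (A :&: K == 1).
Proof.
move=> sAG; apply: (iffP idP) => [tiAK a aA rho_a | faithfulA].
  by apply/set1gP; rewrite -(eqP tiAK) inE aA inE (subsetP sAG).
by rewrite -subG1; apply/subsetP => a; rewrite !inE => /andP[aA /andP[_ /(faithfulA a aA)->]].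
Qed.

End ScalarKernel.

Lemma faithful_onS (gT : finGroupType) (n : nat) (rho : gT -> 'M[algC]_n) (A B : {set gT}) :
  B \subset A -> faithful_on A rho -> faithful_on B rho.
Proof. by move=> sBA faithfulA b bB; apply: faithfulA; apply: (subsetP sBA). Qed.

Lemma faithful_on_center_faithful (gT : finGroupType) (p : nat) (G A : {group gT})
    (alpha : gT -> gT -> algC) (n : nat) (rho : gT -> 'M[algC]_n) :
  p.-group G -> cyclic 'Z(G) -> cocycle2 G alpha -> alpha_rep G alpha rho ->
  A \subset 'Z(G) -> A :!=: 1 -> faithful_on A rho -> faithful_on G rho.
Proof.
move=> pG cycZ [alpha_neq0 _] rho_rep sAZ ntA faithfulA.
pose K := scalar_kernel_group alpha_neq0 rho_rep.
have nKG : K <| G := scalar_kernel_normal alpha_neq0 rho_rep.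
have sAG := subset_trans sAZ (center_sub G).
apply/(faithful_onP alpha_neq0 rho_rep (subxx G)).
rewrite (setIidPr (normal_sub nKG)).
move/(faithful_onP alpha_neq0 rho_rep sAG): faithfulA; apply: contraTT => ntK.
by rewrite setIC (normal_meet_cyclic_center pG cycZ nKG).
Qed.

Theorem corollary2p8 (gT : finGroupType) (G : {group gT}) (p : nat)
  (alpha : gT -> gT -> algC) (n : nat) (rho : gT -> 'M[algC]_n) :
  prime p -> p.-group G -> cyclic 'Z(G) ->
  cocycle2 G alpha -> alpha_rep G alpha rho -> alpha_rep_irr G rho ->
  (faithful_on G rho <->
     (forall A : {group gT}, A \subset 'Z(G) -> A :!=: 1 -> faithful_on A rho)) /\
  (G :!=: 1 ->
   (faithful_on G rho <->
     (exists A : {group gT}, [/\ A \subset 'Z(G), A :!=: 1 & faithful_on A rho]))).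
Proof.
move=> _ pG cycZ alpha_cocycle rho_rep _.
have sZG := center_sub G.
have sZZ : 'Z(G) \subset 'Z(G) := subxx _.
have ntZ : G :!=: 1 -> 'Z(G) :!=: 1 by move=> ntG; rewrite center_nil_eq1 // (pgroup_nil pG).
have from_center A := @faithful_on_center_faithful _ _ G A _ _ _ pG cycZ alpha_cocycle rho_rep.
split; last first.
  move=> ntG; split=> [faithfulG | [A [sAZ ntA faithfulA]]].
    by exists 'Z(G)%G; split; [| exact: ntZ | exact: faithful_onS sZG faithfulG].
  exact: from_center sAZ ntA faithfulA.
split=> [faithfulG A sAZ _ | faithfulZ].
  exact: faithful_onS (subset_trans sAZ sZG) faithfulG.
have [G1 | /ntZ ntZG] := eqsVneq G 1.
  by move=> a; rewrite G1 inE => /eqP.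
have faithfulZ1 := faithfulZ _ sZZ ntZG.
exact: (from_center _ sZZ ntZG faithfulZ1).
Qed.
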